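(* Consider the system $S'=\Lambda-\beta\frac{SB}{B+D}-(\mu+\psi)S+wR$, $V'=\psi S-\sigma\beta\frac{VB}{B+D}-\mu V$, $I'=\beta\frac{SB}{B+D}+\sigma\beta\frac{VB}{B+D}-(\mu+\gamma)I$, $R'=\gamma I-(\mu+w)R$, $B'=\eta I-\delta B$. Consider a bifurcation point in parameter space (as described in the context) at which ${\cal R}_0=1$, $a=0$, $b>0$ and $e\neq 0$. Then $c\le 0$.
   Context: All parameters $\Lambda,\beta,D,\mu,\psi,w,\sigma,\gamma,\eta,\delta$ are positive constants. The unique disease-free equilibrium (DFE) is $(S,V,I,R,B)=\left(\frac{\Lambda}{\mu+\psi},\frac{\Lambda\psi}{\mu(\mu+\psi)},0,0,0\right)$, the infected variables are $I$ and $B$, and ${\cal R}_0=\frac{\eta\beta(S_0+\sigma V_0)}{D\delta(\mu+\gamma)}$ where $S_0,V_0$ are the DFE values. A bifurcation point is a parameter value at which ${\cal R}_0=1$, zero is a simple eigenvalue of the Jacobian at the DFE and all other eigenvalues have negative real parts. Two of the model parameters are chosen as $\alpha_1,\alpha_2$ (shifted so that the bifurcation point corresponds to $\alpha_1=\alpha_2=0$), with the DFE independent of $\alpha_1$. Adjoining $\dot\alpha_1=\dot\alpha_2=0$ and restricting to the centre manifold of the DFE at the bifurcation point gives a scalar equation $\dot u=h(u,\alpha_1,\alpha_2)$, with $u$ a coordinate vanishing at the DFE and increasing along the null eigenvector whose infected components are non-negative; $h(0,\alpha_1,\alpha_2)=0$. Set $a=\tfrac12h_{uu}$, $b=h_{u\alpha_1}$,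 $c=\tfrac13h_{uuu}$, $d=h_{uu\alpha_2}$, all at $(0,0,0)$, and $e=\frac{-bd+h_{uu\alpha_1}h_{u\alpha_2}}{2bc}$ evaluated at $(0,0,0)$. *)

From HB Require Import structures.
From mathcomp Require Import all_boot all_order all_algebra.
From mathcomp Require Import all_classical all_reals all_analysis.
From mathcomp Require Import complex.
Set Implicit Arguments. Unset Strict Implicit. Unset Printing Implicit Defensive.
Import Order.TTheory GRing.Theory Num.Theory.
Import numFieldNormedType.Exports.
Local Open Scope classical_set_scope.
Local Open Scope ring_scope.

Section Model.
Variable R : realType.

Definition Lam (p : 'I_10 -> R) := p (inord 0).
Definition bet (p : 'I_10 -> R) := p (inord 1).
Definition Dh  (p : 'I_10 -> R) := p (inord 2).
Definition mu  (p : 'I_10 -> R) := p (inord 3).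
Definition psi (p : 'I_10 -> R) := p (inord 4).
Definition wr  (p : 'I_10 -> R) := p (inord 5).
Definition sig (p : 'I_10 -> R) := p (inord 6).
Definition gam (p : 'I_10 -> R) := p (inord 7).
Definition eta (p : 'I_10 -> R) := p (inord 8).
Definition del (p : 'I_10 -> R) := p (inord 9).

Definition sS (x : 'rV[R]_5) := x 0 (inord 0).
Definition sV (x : 'rV[R]_5) := x 0 (inord 1).
Definition sI (x : 'rV[R]_5) := x 0 (inord 2).
Definition sR (x : 'rV[R]_5) := x 0 (inord 3).
Definition sB (x : 'rV[R]_5) := x 0 (inord 4).

Definition field (p : 'I_10 -> R) (x : 'rV[R]_5) : 'rV[R]_5 :=
  \row_(i < 5) nth 0
   [:: Lam p - bet p * (sS x * sB x / (sB x + Dh p)) - (mu p + psi p) * sS x + wr p * sR x;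
       psi p * sS x - sig p * bet p * (sV x * sB x / (sB x + Dh p)) - mu p * sV x;
       bet p * (sS x * sB x / (sB x + Dh p)) + sig p * bet p * (sV x * sB x / (sB x + Dh p))
         - (mu p + gam p) * sI x;
       gam p * sI x - (mu p + wr p) * sR x;
       eta p * sI x - del p * sB x] i.

Definition dfe (p : 'I_10 -> R) : 'rV[R]_5 :=
  \row_(i < 5) nth 0
   [:: Lam p / (mu p + psi p); Lam p * psi p / (mu p * (mu p + psi p)); 0; 0; 0] i.

Definition R0 (p : 'I_10 -> R) : R :=
  eta p * bet p * (sS (dfe p) + sig p * sV (dfe p))
  / (Dh p * del p * (mu p + gam p)).

Definition jac (p : 'I_10 -> R) : 'M[R]_5 :=
  \matrix_(i < 5, j < 5) 'D_(delta_mx 0 j) (fun x => field p x 0 i) (dfe p).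

Definition bif_spectrum (J : 'M[R]_5) : Prop :=
  mup 0 (char_poly J) = 1%N /\
  forall z : complex.complex R,
    root (map_poly (complex.real_complex R) (char_poly J)) z ->
    z != 0 -> complex.Re z < 0.

Definition shiftp (p0 : 'I_10 -> R) (i1 i2 : 'I_10) (a1 a2 : R) : 'I_10 -> R :=
  fun k => p0 k + (k == i1)%:R * a1 + (k == i2)%:R * a2.

(* Parameters as a function of the centre-manifold coordinates (u, a1, a2). *)
Definition parof (p0 : 'I_10 -> R) (i1 i2 : 'I_10) (y : 'rV[R]_3) : 'I_10 -> R :=
  shiftp p0 i1 i2 (y 0 (inord 1)) (y 0 (inord 2)).

Definition e3 (i : nat) : 'rV[R]_3 := delta_mx 0 (inord i).

Fixpoint CkOn (k : nat) (U : set 'rV[R]_3) (f : 'rV[R]_3 -> R) : Prop :=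
  match k with
  | 0%N => forall y, U y -> {for y, continuous f}
  | k'.+1 => (forall y, U y -> forall i : 'I_3, derivable f y (delta_mx 0 i)) /\
             (forall i : 'I_3, CkOn k' U (fun y => 'D_(delta_mx 0 i) f y))
  end.

(* Partial derivatives of the reduced field h at the origin
   (coordinate 0 = u, 1 = alpha1, 2 = alpha2). *)
Definition d1 (i : nat) (f : 'rV[R]_3 -> R) := fun y => 'D_(e3 i) f y.

Definition coef_a (h : 'rV[R]_3 -> R) : R := (d1 0 (d1 0 h) 0) / 2.
Definition coef_b (h : 'rV[R]_3 -> R) : R := d1 1 (d1 0 h) 0.
Definition coef_c (h : 'rV[R]_3 -> R) : R := (d1 0 (d1 0 (d1 0 h)) 0) / 3.
Definition coef_d (h : 'rV[R]_3 -> R) : R := d1 2 (d1 0 (d1 0 h)) 0.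
Definition coef_e (h : 'rV[R]_3 -> R) : R :=
  (- coef_b h * coef_d h + d1 1 (d1 0 (d1 0 h)) 0 * d1 2 (d1 0 h) 0)
  / (2 * coef_b h * coef_c h).

End Model.

From mathcomp Require Import all_boot all_order all_algebra.
From mathcomp Require Import all_classical all_reals all_analysis.
From mathcomp Require Import complex.
From mathcomp Require Import ring lra.
Import Order.TTheory GRing.Theory Num.Theory.
Import numFieldNormedType.Exports.
Local Open Scope classical_set_scope.
Local Open Scope ring_scope.
Set Implicit Arguments. Unset Strict Implicit. Unset Printing Implicit Defensive.

(* On the u-axis (alpha1 = alpha2 = 0) the centre manifold is a curve x(u)
   through the DFE with x'(0) = w, the null vector, and H(u) := h(u, 0, 0)
   satisfies H x' = F(x).  Differentiating this identity at u = 0 gives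
   H(0) = 0 at order 0 and H'(0) = 0 at order 1, and a = 0 means H''(0) = 0,
   so the second-order terms reduce to D^2F(w, w) + J z = 0 with z = x''(0).
   Pairing with the left null vector (0, 0, 1, 0, kappa) of J, where
   kappa = (mu + gamma) / eta, and clearing the denominator B + D turns the
   I and B equations into H Z = beta (S + sigma V) B - kappa delta (B + D) B,
   whose right-hand side is polynomial.  Its order-2 coefficient gives a
   relation on w which, with R0 = 1, turns the order-3 coefficient into
     H'''(0) Z(0) = 3 beta w_B T,  T = z_S + sigma z_V - (S0 + sigma V0) z_B / D,
   where Z(0) = D (w_I + kappa w_B) > 0.  Solving the second-order equations
   for z gives
     T = 2 beta sigma w_B (w_S + w_V - (S0 + V0) w_B / D) / (D (mu + psi)),
   which is negative because the total population is conserved to first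
   order: w_S + w_V = -(w_I + w_R) < 0.  Hence c = H'''(0) / 3 < 0. *)

Section Jets.
Variable R : realType.

Lemma near_eq_is_derive_eq (f g : R -> R) (x a b : R) :
  (\forall u \near x, f u = g u) ->
  is_derive x (1 : R) f a -> is_derive x (1 : R) g b -> a = b.
Proof. by move=> fg df [_ <-]; have [_ <-] := near_eq_is_derive fg df. Qed.

Lemma near_eq_derive_near (f g f1 g1 : R -> R) (x : R) :
  (\forall u \near x, f u = g u) ->
  (\forall u \near x, is_derive u (1 : R) f (f1 u)) ->
  (\forall u \near x, is_derive u (1 : R) g (g1 u)) ->
  \forall u \near x, f1 u = g1 u.
Proof.
move=> /nbhs_interior fg df dg; near=> u.
apply: (near_eq_is_derive_eq (x := u)); [near: u; exact: fg|near: u..].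
- exact: df.
- exact: dg.
Unshelve. all: by end_near. Qed.

Lemma is_derive_cont (f : R -> R) (x d : R) :
  is_derive x (1 : R) f d -> {for x, continuous f}.
Proof.
by move=> [df _]; apply: differentiable_continuous; apply/derivable1_diffP.
Qed.

Definition jet2 (f f1 f2 : R -> R) : Prop :=
  (\forall u \near 0, is_derive u (1 : R) f (f1 u)) /\
  (\forall u \near 0, is_derive u (1 : R) f1 (f2 u)).

Definition jet3 (f f1 f2 : R -> R) (f3 : R) : Prop :=
  jet2 f f1 f2 /\ is_derive (0 : R) (1 : R) f2 f3.

Definition jet2c (f f1 f2 : R -> R) : Prop :=
  jet2 f f1 f2 /\ {for 0, continuous f2}.

Lemma near_eq_jet2 (f f1 f2 g g1 g2 : R -> R) : jet2 f f1 f2 -> jet2 g g1 g2 ->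
  (\forall u \near 0, f u = g u) -> [/\ f 0 = g 0, f1 0 = g1 0 & f2 0 = g2 0].
Proof.
move=> [df df1] [dg dg1] fg; have e1 := near_eq_derive_near fg df dg.
have e2 := near_eq_derive_near e1 df1 dg1.
by split; [exact: nbhs_singleton fg | exact: nbhs_singleton e1 |
  exact: nbhs_singleton e2].
Qed.

Lemma near_eq_jet3 (f f1 f2 g g1 g2 : R -> R) (f3 g3 : R) :
  jet3 f f1 f2 f3 -> jet3 g g1 g2 g3 ->
  (\forall u \near 0, f u = g u) ->
  [/\ f 0 = g 0, f1 0 = g1 0, f2 0 = g2 0 & f3 = g3].
Proof.
move=> [[df df1] df2] [[dg dg1] dg2] fg; have e1 := near_eq_derive_near fg df dg.
have e2 := near_eq_derive_near e1 df1 dg1.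
split; [exact: nbhs_singleton fg | exact: nbhs_singleton e1 |
  exact: nbhs_singleton e2 | exact: near_eq_is_derive_eq e2 df2 dg2].
Qed.

Lemma jet2_cont (f f1 f2 : R -> R) : jet2 f f1 f2 ->
  {for 0, continuous f} /\ {for 0, continuous f1}.
Proof.
by move=> [df df1]; split; [exact: is_derive_cont (nbhs_singleton df) |
  exact: is_derive_cont (nbhs_singleton df1)].
Qed.

Lemma jet2_cst (c : R) : jet2 (fun=> c) (fun=> 0) (fun=> 0).
Proof. by split; near=> u; apply: is_derive_eq. Unshelve. all: by end_near. Qed.

Lemma jet2D (f f1 f2 g g1 g2 : R -> R) : jet2 f f1 f2 -> jet2 g g1 g2 ->
  jet2 (f \+ g) (f1 \+ g1) (f2 \+ g2).
Proof.
move=> [df df1] [dg dg1]; split; near=> u.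
- have ? : is_derive u (1 : R) f (f1 u) by near: u.
  have ? : is_derive u (1 : R) g (g1 u) by near: u.
  exact: is_derive_eq.
- have ? : is_derive u (1 : R) f1 (f2 u) by near: u.
  have ? : is_derive u (1 : R) g1 (g2 u) by near: u.
  exact: is_derive_eq.
Unshelve. all: by end_near. Qed.

Lemma jet2N (f f1 f2 : R -> R) : jet2 f f1 f2 -> jet2 (\- f) (\- f1) (\- f2).
Proof.
move=> [df df1]; split; near=> u.
- have ? : is_derive u (1 : R) f (f1 u) by near: u.
  exact: is_derive_eq.
- have ? : is_derive u (1 : R) f1 (f2 u) by near: u.
  exact: is_derive_eq.
Unshelve. all: by end_near. Qed.

Lemma jet2Z (c : R) (f f1 f2 : R -> R) : jet2 f f1 f2 ->
  jet2 (fun u => c * f u) (fun u => c * f1 u) (fun u => c * f2 u).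
Proof.
move=> [df df1]; split; near=> u.
- have ? : is_derive u (1 : R) f (f1 u) by near: u.
  by apply: is_derive_eq; rewrite /GRing.scale /=; ring.
- have ? : is_derive u (1 : R) f1 (f2 u) by near: u.
  by apply: is_derive_eq; rewrite /GRing.scale /=; ring.
Unshelve. all: by end_near. Qed.

Lemma jet2M (f f1 f2 g g1 g2 : R -> R) : jet2 f f1 f2 -> jet2 g g1 g2 ->
  jet2 (f \* g) (fun u => f1 u * g u + f u * g1 u)
       (fun u => f2 u * g u + 2 * (f1 u * g1 u) + f u * g2 u).
Proof.
move=> [df df1] [dg dg1]; split; near=> u.
- have ? : is_derive u (1 : R) f (f1 u) by near: u.
  have ? : is_derive u (1 : R) g (g1 u) by near: u.
  by apply: is_derive_eq; rewrite /GRing.scale /=; ring.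
- have ? : is_derive u (1 : R) f (f1 u) by near: u.
  have ? : is_derive u (1 : R) g (g1 u) by near: u.
  have ? : is_derive u (1 : R) f1 (f2 u) by near: u.
  have ? : is_derive u (1 : R) g1 (g2 u) by near: u.
  by apply: is_derive_eq; rewrite /GRing.scale /=; ring.
Unshelve. all: by end_near. Qed.

Lemma jet3_cst (c : R) : jet3 (fun=> c) (fun=> 0) (fun=> 0) 0.
Proof. by split; [exact: jet2_cst | apply: is_derive_eq]. Qed.

Lemma jet3D (f f1 f2 g g1 g2 : R -> R) (f3 g3 : R) :
  jet3 f f1 f2 f3 -> jet3 g g1 g2 g3 ->
  jet3 (f \+ g) (f1 \+ g1) (f2 \+ g2) (f3 + g3).
Proof.
by move=> [jf df2] [jg dg2]; split; [exact: jet2D | exact: is_derive_eq].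
Qed.

Lemma jet3N (f f1 f2 : R -> R) (f3 : R) :
  jet3 f f1 f2 f3 -> jet3 (\- f) (\- f1) (\- f2) (- f3).
Proof. by move=> [jf df2]; split; [exact: jet2N | exact: is_derive_eq]. Qed.

Lemma jet3Z (c : R) (f f1 f2 : R -> R) (f3 : R) : jet3 f f1 f2 f3 ->
  jet3 (fun u => c * f u) (fun u => c * f1 u) (fun u => c * f2 u) (c * f3).
Proof.
move=> [jf df2]; split; first exact: jet2Z.
by apply: is_derive_eq; rewrite /GRing.scale /=; ring.
Qed.

Lemma jet3M (f f1 f2 g g1 g2 : R -> R) (f3 g3 : R) :
  jet3 f f1 f2 f3 -> jet3 g g1 g2 g3 ->
  jet3 (f \* g) (fun u => f1 u * g u + f u * g1 u)
       (fun u => f2 u * g u + 2 * (f1 u * g1 u) + f u * g2 u)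
       (f3 * g 0 + 3 * (f2 0 * g1 0) + 3 * (f1 0 * g2 0) + f 0 * g3).
Proof.
move=> [[df df1] df2] [[dg dg1] dg2]; split; first exact: jet2M.
have ? := nbhs_singleton df; have ? := nbhs_singleton dg.
have ? := nbhs_singleton df1; have ? := nbhs_singleton dg1.
by apply: is_derive_eq; rewrite /GRing.scale /=; ring.
Qed.

Lemma is_deriveM0 (f g : R -> R) (a : R) :
  f 0 = 0 -> is_derive (0 : R) (1 : R) f a -> {for 0, continuous g} ->
  is_derive (0 : R) (1 : R) (f \* g) (a * g 0).
Proof.
move=> f0 [df <-] cg.
have quotE : (fun t : R => t^-1 *: ((f \* g) (t *: 1 + 0) - (f \* g) 0)) =
    (fun t => t^-1 *: (f (t *: 1 + 0) - f 0) * g t).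
  apply/funext => t /=; rewrite f0 !mul0r !subr0 addr0 /GRing.scale /=.
  by rewrite mulr1 mulrA.
have cv : (fun t : R => t^-1 *: ((f \* g) (t *: 1 + 0) - (f \* g) 0)) @ 0^'
    --> 'D_1 f 0 * g 0.
  by rewrite quotE; apply: cvgM; [exact: df | exact/continuous_withinNx].
by split; [exact: cvgP cv | exact: cvg_lim cv].
Qed.

Lemma jet3M0 (f f1 f2 g g1 g2 : R -> R) (f3 : R) :
  jet3 f f1 f2 f3 -> f 0 = 0 -> jet2c g g1 g2 ->
  jet3 (f \* g) (fun u => f1 u * g u + f u * g1 u)
       (fun u => f2 u * g u + 2 * (f1 u * g1 u) + f u * g2 u)
       (f3 * g 0 + 3 * (f2 0 * g1 0) + 3 * (f1 0 * g2 0)).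
Proof.
move=> [[df df1] df2] f0 [[dg dg1] cg2]; split; first exact: jet2M.
have ? := nbhs_singleton df; have ? := nbhs_singleton dg.
have ? := nbhs_singleton df1; have ? := nbhs_singleton dg1.
have ? := is_deriveM0 f0 (nbhs_singleton df) cg2.
by apply: is_derive_eq; rewrite /GRing.scale /=; ring.
Qed.

Lemma jet2c_cst (c : R) : jet2c (fun=> c) (fun=> 0) (fun=> 0).
Proof. by split; [exact: jet2_cst | exact: cvg_cst]. Qed.

Lemma jet2cD (f f1 f2 g g1 g2 : R -> R) : jet2c f f1 f2 -> jet2c g g1 g2 ->
  jet2c (f \+ g) (f1 \+ g1) (f2 \+ g2).
Proof. by move=> [jf cf] [jg cg]; split; [exact: jet2D | exact: cvgD]. Qed.

Lemma jet2cZ (c : R) (f f1 f2 : R -> R) : jet2c f f1 f2 ->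
  jet2c (fun u => c * f u) (fun u => c * f1 u) (fun u => c * f2 u).
Proof.
by move=> [jf cf]; split; [exact: jet2Z | apply: cvgM; [exact: cvg_cst |]].
Qed.

Lemma jet2cM (f f1 f2 g g1 g2 : R -> R) : jet2c f f1 f2 -> jet2c g g1 g2 ->
  jet2c (f \* g) (fun u => f1 u * g u + f u * g1 u)
        (fun u => f2 u * g u + 2 * (f1 u * g1 u) + f u * g2 u).
Proof.
move=> [jf cf2] [jg cg2]; split; first exact: jet2M.
have [cf cf1] := jet2_cont jf; have [cg cg1] := jet2_cont jg.
apply: cvgD; first apply: cvgD.
- exact: cvgM.
- by apply: cvgM; [exact: cvg_cst | exact: cvgM].
- exact: cvgM.
Qed.

End Jets.

Fact Du_key : unit. Proof. by []. Qed.

Section UAxis.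
Variable R : realType.
Variable U : set 'rV[R]_3.
Hypotheses (U_open : open U) (U0 : U 0).
Implicit Types f : 'rV[R]_3 -> R.

Local Notation e0 := (e3 R 0).

(* Locked: otherwise comparing [Du f m u] with [Du f n u] for [m != n], as
   [ring] and [lra] do when collecting atoms, unfolds the limits in ['D]. *)
Definition Du : ('rV[R]_3 -> R) -> nat -> R -> R :=
  locked_with Du_key (fun f n u => iter n (d1 0) f (u *: e0)).

Lemma DuE f n : Du f n = fun u => iter n (d1 0) f (u *: e0).
Proof. by rewrite /Du locked_withE. Qed.

Lemma Du0 f n : Du f n 0 = iter n (d1 0) f 0.
Proof. by rewrite DuE /= scale0r. Qed.

Lemma near0_U : \forall u \near 0, U (u *: e0).
Proof.
have nU : nbhs (0 : 'rV[R]_3) U by apply: open_nbhs_nbhs.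
have cv : (fun u : R => u *: e0) @ 0 --> (0 : 'rV[R]_3).
  by rewrite -[X in _ --> X](scale0r e0); exact: scalel_continuous.
exact: cv _ nU.
Qed.

Lemma is_derive_along f u : derivable f (u *: e0) e0 ->
  is_derive u (1 : R) (fun t => f (t *: e0)) ('D_e0 f (u *: e0)).
Proof.
have quotE : (fun t : R => t^-1 *: (((fun s => f (s *: e0)) \o shift u) (t *: 1)
      - f (u *: e0))) =
    (fun t => t^-1 *: ((f \o shift (u *: e0)) (t *: e0) - f (u *: e0))).
  by apply/funext => t /=; rewrite scalerDl -[t%:A]/(t * 1) mulr1.
by move=> df; split; rewrite /derivable /derive quotE.
Qed.

Lemma CkOnS_d1 k f : CkOn k.+1 U f ->
  (forall y, U y -> derivable f y e0) /\ CkOn k U (d1 0 f).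
Proof. by case=> df cf; split; [move=> y Uy; exact: df | exact: cf]. Qed.

Lemma CkOn3_derivable f n : CkOn 3 U f -> (n < 3)%N ->
  forall y, U y -> derivable (iter n (d1 0) f) y e0.
Proof.
move=> /(@CkOnS_d1 2)[df0 /(@CkOnS_d1 1)[df1 /(@CkOnS_d1 0)[df2 _]]].
case: n => [|[|[|n]]] n3 y Uy; [exact: df0 | exact: df1 | exact: df2 | by []].
Qed.

Lemma CkOn3_cont f : CkOn 3 U f -> {for 0, continuous (Du f 3)}.
Proof.
move=> /(@CkOnS_d1 2)[_ /(@CkOnS_d1 1)[_ /(@CkOnS_d1 0)[_ c3]]].
rewrite DuE; apply: continuous_comp; first exact: scalel_continuous.
by rewrite scale0r; exact: c3.
Qed.

Lemma near_is_derive_Du f n : CkOn 3 U f -> (n < 3)%N ->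
  \forall u \near 0, is_derive u (1 : R) (Du f n) (Du f n.+1 u).
Proof.
move=> Cf n3; near=> u; rewrite !DuE /=; apply: is_derive_along.
by apply: CkOn3_derivable => //; near: u; exact: near0_U.
Unshelve. all: by end_near. Qed.

Lemma CkOn3_jet3 f : CkOn 3 U f -> jet3 (Du f 0) (Du f 1) (Du f 2) (Du f 3 0).
Proof.
move=> Cf; split; first split.
- exact: near_is_derive_Du.
- exact: near_is_derive_Du.
- exact: nbhs_singleton (near_is_derive_Du (n := 2) Cf isT).
Qed.

Lemma CkOn3_jet2c f : CkOn 3 U f -> jet2c (Du f 1) (Du f 2) (Du f 3).
Proof.
move=> Cf; split; first split.
- exact: near_is_derive_Du.
- exact: near_is_derive_Du.
- exact: CkOn3_cont.
Qed.

End UAxis.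

Lemma derive_along_line (R : realType) (V : normedModType R) (f : V -> R)
    (a x : V) (d : R) :
  is_derive (0 : R) (1 : R) (fun t => f (t *: a + x)) d -> 'D_a f x = d.
Proof.
have quotE : (fun t : R => t^-1 *: ((f \o shift x) (t *: a) - f x)) =
    (fun t => t^-1 *: (((fun s => f (s *: a + x)) \o shift 0) (t *: 1)
      - f (0 *: a + x))).
  by apply/funext => t /=; rewrite scale0r add0r addr0 -[t%:A]/(t * 1) mulr1.
by move=> [_ <-]; rewrite /derive quotE.
Qed.

Lemma is_deriveV_affine (R : realType) (c d : R) : d != 0 ->
  is_derive (0 : R) (1 : R) (fun t => (t * c + d)^-1) (- c / d ^+ 2).
Proof.
move=> d0; have df : is_derive (0 : R) (1 : R) (fun t => t * c + d) c.
  by apply: is_derive_eq; rewrite /GRing.scale /=; ring.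
have d0' : (fun t => t * c + d) 0 != 0 by rewrite /= mul0r add0r.
have dv := @is_deriveV R (fun t => t * c + d) 0 c 1 d0' df.
apply: (is_derive_eq dv).
by rewrite /= mul0r add0r /GRing.scale /=; field.
Qed.

Lemma delta_mx_inord (R : nzRingType) (n m k : nat) : (m <= n)%N -> (k <= n)%N ->
  (delta_mx 0 (inord m) : 'rV[R]_n.+1) 0 (inord k) = (m == k)%:R.
Proof. by move=> mn kn; rewrite mxE eqxx /= -val_eqE /= !inordK // eq_sym. Qed.

Section Linearization.
Variable R : realType.
Variable p : 'I_10 -> R.
Implicit Types x a w : 'rV[R]_5.

Definition dfeS := Lam p / (mu p + psi p).
Definition dfeV := Lam p * psi p / (mu p * (mu p + psi p)).

Lemma field_S x : field p x 0 (inord 0) =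
  Lam p - bet p * (sS x * sB x / (sB x + Dh p)) - (mu p + psi p) * sS x
  + wr p * sR x.
Proof. by rewrite mxE (@inordK 4). Qed.

Lemma field_V x : field p x 0 (inord 1) =
  psi p * sS x - sig p * bet p * (sV x * sB x / (sB x + Dh p)) - mu p * sV x.
Proof. by rewrite mxE (@inordK 4). Qed.

Lemma field_I x : field p x 0 (inord 2) =
  bet p * (sS x * sB x / (sB x + Dh p))
  + sig p * bet p * (sV x * sB x / (sB x + Dh p))
  - (mu p + gam p) * sI x.
Proof. by rewrite mxE (@inordK 4). Qed.

Lemma field_R x : field p x 0 (inord 3) = gam p * sI x - (mu p + wr p) * sR x.
Proof. by rewrite mxE (@inordK 4). Qed.

Lemma field_B x : field p x 0 (inord 4) = eta p * sI x - del p * sB x.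
Proof. by rewrite mxE (@inordK 4). Qed.

Lemma dfeE : [/\ sS (dfe p) = dfeS, sV (dfe p) = dfeV, sI (dfe p) = 0,
  sR (dfe p) = 0 & sB (dfe p) = 0].
Proof. by split; rewrite /sS /sV /sI /sR /sB mxE (@inordK 4). Qed.

Lemma sS_line a t : sS (t *: a + dfe p) = t * sS a + dfeS.
Proof. by rewrite /sS !mxE (@inordK 4). Qed.

Lemma sV_line a t : sV (t *: a + dfe p) = t * sV a + dfeV.
Proof. by rewrite /sV !mxE (@inordK 4). Qed.

Lemma sI_line a t : sI (t *: a + dfe p) = t * sI a.
Proof. by rewrite /sI !mxE (@inordK 4) //= addr0. Qed.

Lemma sR_line a t : sR (t *: a + dfe p) = t * sR a.
Proof. by rewrite /sR !mxE (@inordK 4) //= addr0. Qed.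

Lemma sB_line a t : sB (t *: a + dfe p) = t * sB a.
Proof. by rewrite /sB !mxE (@inordK 4) //= addr0. Qed.

Definition line_dfeE := (sS_line, sV_line, sI_line, sR_line, sB_line).

Hypothesis Dh_neq0 : Dh p != 0.

Lemma jac_row_S a : 'D_a (fun x => field p x 0 (inord 0)) (dfe p) =
  - bet p * dfeS * sB a / Dh p - (mu p + psi p) * sS a + wr p * sR a.
Proof.
apply: derive_along_line; under eq_fun do rewrite field_S !line_dfeE.
have dv := is_deriveV_affine (sB a) Dh_neq0.
apply: is_derive_eq; rewrite /GRing.scale /= !(mul0r, add0r, addr0, mulr0, mulr1).
by field.
Qed.

Lemma jac_row_V a : 'D_a (fun x => field p x 0 (inord 1)) (dfe p) =
  psi p * sS a - sig p * bet p * dfeV * sB a / Dh p - mu p * sV a.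
Proof.
apply: derive_along_line; under eq_fun do rewrite field_V !line_dfeE.
have dv := is_deriveV_affine (sB a) Dh_neq0.
apply: is_derive_eq; rewrite /GRing.scale /= !(mul0r, add0r, addr0, mulr0, mulr1).
by field.
Qed.

Lemma jac_row_I a : 'D_a (fun x => field p x 0 (inord 2)) (dfe p) =
  bet p * dfeS * sB a / Dh p + sig p * bet p * dfeV * sB a / Dh p
  - (mu p + gam p) * sI a.
Proof.
apply: derive_along_line; under eq_fun do rewrite field_I !line_dfeE.
have dv := is_deriveV_affine (sB a) Dh_neq0.
apply: is_derive_eq; rewrite /GRing.scale /= !(mul0r, add0r, addr0, mulr0, mulr1).
by field.
Qed.

Lemma jac_row_R a : 'D_a (fun x => field p x 0 (inord 3)) (dfe p) =
  gam p * sI a - (mu p + wr p) * sR a.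
Proof.
apply: derive_along_line; under eq_fun do rewrite field_R !line_dfeE.
by apply: is_derive_eq; rewrite /GRing.scale /=; ring.
Qed.

Lemma jac_row_B a : 'D_a (fun x => field p x 0 (inord 4)) (dfe p) =
  eta p * sI a - del p * sB a.
Proof.
apply: derive_along_line; under eq_fun do rewrite field_B !line_dfeE.
by apply: is_derive_eq; rewrite /GRing.scale /=; ring.
Qed.

Lemma jac_mulmx_entry w (k : 'I_5) : (jac p *m w^T) k 0 =
  \sum_(m < 5) 'D_(delta_mx 0 m) (fun x => field p x 0 k) (dfe p) * w 0 m.
Proof. by rewrite !mxE; apply: eq_bigr => m _; rewrite !mxE. Qed.

Lemma sum_ord5 (F : 'I_5 -> R) : \sum_(m < 5) F m =
  F (inord 0) + F (inord 1) + F (inord 2) + F (inord 3) + F (inord 4).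
Proof.
rewrite !big_ord_recr big_ord0 /= add0r.
by congr (_ + _ + _ + _ + _); congr F; apply: val_inj; rewrite /= inordK.
Qed.

Lemma jac_kernelP w : jac p *m w^T = 0 -> [/\
  - bet p * dfeS * sB w / Dh p - (mu p + psi p) * sS w + wr p * sR w = 0,
  psi p * sS w - sig p * bet p * dfeV * sB w / Dh p - mu p * sV w = 0,
  bet p * dfeS * sB w / Dh p + sig p * bet p * dfeV * sB w / Dh p
    - (mu p + gam p) * sI w = 0,
  gam p * sI w - (mu p + wr p) * sR w = 0 &
  eta p * sI w - del p * sB w = 0].
Proof.
move=> Jw; have row k : (jac p *m w^T) (inord k) 0 = 0 by rewrite Jw mxE.
move: (row 0%N) (row 1%N) (row 2%N) (row 3%N) (row 4%N).
rewrite !jac_mulmx_entry !sum_ord5.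
rewrite !jac_row_S !jac_row_V !jac_row_I !jac_row_R !jac_row_B.
rewrite /sS /sV /sI /sR /sB !delta_mx_inord //= => eS eV eI eR eB.
by split; [apply: etrans eS | apply: etrans eV | apply: etrans eI |
  apply: etrans eR | apply: etrans eB]; ring.
Qed.

End Linearization.

Section CentreManifold.
Variable R : realType.
Variables (p0 : 'I_10 -> R) (i1 i2 : 'I_10) (U : set 'rV[R]_3)
  (phi : 'rV[R]_3 -> 'rV[R]_5) (h : 'rV[R]_3 -> R).
Hypothesis p0_gt0 : forall k, 0 < p0 k.
Hypothesis R0_eq1 : R0 p0 = 1.
Hypotheses (U_open : open U) (U0 : U 0).
Hypothesis phi_C3 : forall j : 'I_5, CkOn 3 U (fun y => phi y 0 j).
Hypothesis h_C3 : CkOn 3 U h.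
Hypothesis phi_dfe :
  forall y, U y -> y 0 (inord 0) = 0 -> phi y = dfe (parof p0 i1 i2 y).
Hypothesis phi_invariant : forall y, U y ->
  h y *: 'D_(e3 R 0) phi y = field (parof p0 i1 i2 y) (phi y).
Hypothesis phi'_null : jac p0 *m ('D_(e3 R 0) phi 0)^T = 0.
Hypothesis phi'_neq0 : 'D_(e3 R 0) phi 0 != 0.
Hypothesis phi'_I_ge0 : 0 <= sI ('D_(e3 R 0) phi 0).
Hypothesis a_eq0 : coef_a h = 0.

Local Notation e0 := (e3 R 0).
Local Notation Λ := (Lam p0).
Local Notation β := (bet p0).
Local Notation D := (Dh p0).
Local Notation μ := (mu p0).
Local Notation ψ := (psi p0).
Local Notation ω := (wr p0).
Local Notation σ := (sig p0).
Local Notation γ := (gam p0).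
Local Notation η := (eta p0).
Local Notation δ := (del p0).
Local Notation S0 := (dfeS p0).
Local Notation V0 := (dfeV p0).

Let x (k n : nat) : R -> R := Du (fun y => phi y 0 (inord k)) n.
Let H (n : nat) : R -> R := Du h n.
Let w (k : nat) : R := x k 1 0.
Let z (k : nat) : R := x k 2 0.
Let κ : R := (μ + γ) / η.

Let D_gt0 : 0 < D := p0_gt0 _.

Lemma parof_uaxis u : parof p0 i1 i2 (u *: e0) = p0.
Proof.
apply/funext => k; rewrite /parof /shiftp !mxE -!val_eqE /= !inordK //=.
by rewrite !mulr0 !addr0.
Qed.

Lemma phi_at0 : phi 0 = dfe p0.
Proof. by rewrite phi_dfe // ?mxE // -(scale0r e0) parof_uaxis. Qed.

Lemma x_at0 : [/\ x 0 0 0 = S0, x 1 0 0 = V0, x 2 0 0 = 0, x 3 0 0 = 0 &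
  x 4 0 0 = 0].
Proof. by rewrite /x !Du0 /= phi_at0; exact: dfeE. Qed.

Lemma Dphi_entry y k : U y ->
  'D_e0 phi y 0 (inord k) = d1 0 (fun t => phi t 0 (inord k)) y.
Proof.
move=> Uy; rewrite derive_mx ?mxE //; apply/derivable_mxP => i j.
by rewrite (ord1 i); apply: (phi_C3 j).1.
Qed.

Lemma w_entry k : 'D_e0 phi 0 0 (inord k) = w k.
Proof. by rewrite Dphi_entry // /w /x Du0. Qed.

Lemma null_rows : [/\
  - β * S0 * w 4 / D - (μ + ψ) * w 0 + ω * w 3 = 0,
  ψ * w 0 - σ * β * V0 * w 4 / D - μ * w 1 = 0,
  β * S0 * w 4 / D + σ * β * V0 * w 4 / D - (μ + γ) * w 2 = 0,
  γ * w 2 - (μ + ω) * w 3 = 0 &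
  η * w 2 - δ * w 4 = 0].
Proof.
have := jac_kernelP (lt0r_neq0 D_gt0) phi'_null.
by rewrite /sS /sV /sI /sR /sB !w_entry.
Qed.

Lemma w_gt0 : [/\ 0 < w 2, 0 < w 3 & 0 < w 4].
Proof.
have [nS nV nI nR nB] := null_rows.
have [μ_gt0 ψ_gt0 ω_gt0 η_gt0 δ_gt0] :
    [/\ 0 < μ, 0 < ψ, 0 < ω, 0 < η & 0 < δ] by split; exact: p0_gt0.
have w2_gt0 : 0 < w 2.
  have w2_ge0 : 0 <= w 2 by rewrite -w_entry.
  rewrite lt_def w2_ge0 andbT; apply: contraNneq phi'_neq0 => w2_0.
  have w4_0 : w 4 = 0.
    by apply: (mulfI (lt0r_neq0 δ_gt0)); move: nB; rewrite w2_0; lra.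
  have w3_0 : w 3 = 0.
    apply: (mulfI (lt0r_neq0 (addr_gt0 μ_gt0 ω_gt0))).
    by move: nR; rewrite w2_0; lra.
  have w0_0 : w 0 = 0.
    apply: (mulfI (lt0r_neq0 (addr_gt0 μ_gt0 ψ_gt0))).
    by move: nS; rewrite w4_0 w3_0; lra.
  have w1_0 : w 1 = 0.
    by apply: (mulfI (lt0r_neq0 μ_gt0)); move: nV; rewrite w0_0 w4_0; lra.
  apply/eqP/matrixP => i j; rewrite (ord1 i) -(inord_val j) w_entry mxE.
  by case: j => [[|[|[|[|[|]]]]]].
split=> //.
- have -> : w 3 = γ * w 2 / (μ + ω).
    apply: (mulIf (lt0r_neq0 (addr_gt0 μ_gt0 ω_gt0))).
    by rewrite divfK ?lt0r_neq0 ?addr_gt0 //; lra.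
  by rewrite divr_gt0 ?mulr_gt0 ?addr_gt0 ?p0_gt0.
- have -> : w 4 = η * w 2 / δ.
    by apply: (mulIf (lt0r_neq0 δ_gt0)); rewrite divfK ?lt0r_neq0 //; lra.
  by rewrite divr_gt0 ?mulr_gt0.
Qed.

Lemma wS_add_wV : w 0 + w 1 = - (w 2 + w 3).
Proof.
have [nS nV nI nR _] := null_rows.
have : μ * (w 0 + w 1 + w 2 + w 3) = 0 by lra.
by move/eqP; rewrite mulf_eq0 gt_eqF ?p0_gt0 //= => /eqP; lra.
Qed.

Lemma kappa_R0 : κ * δ * D = β * (S0 + σ * V0).
Proof.
have [η_gt0 δ_gt0 μγ_gt0] : [/\ 0 < η, 0 < δ & 0 < μ + γ].
  by split; [exact: p0_gt0 | exact: p0_gt0 | apply: addr_gt0; exact: p0_gt0].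
have R0E : η * β * (S0 + σ * V0) = D * δ * (μ + γ).
  move: R0_eq1; rewrite /R0; have [-> -> _ _ _] := dfeE p0.
  move=> /(congr1 (fun t => t * (D * δ * (μ + γ)))); rewrite mul1r divfK //.
  by rewrite !mulf_neq0 ?lt0r_neq0.
have -> : β * (S0 + σ * V0) = D * δ * (μ + γ) / η.
  by rewrite -R0E; field; rewrite lt0r_neq0.
by rewrite /κ; field; rewrite lt0r_neq0.
Qed.

Lemma jet_x k : jet3 (x k 0) (x k 1) (x k 2) (x k 3 0).
Proof. exact (CkOn3_jet3 U_open U0 (phi_C3 (inord k))). Qed.

Lemma jet2c_x k : jet2c (x k 1) (x k 2) (x k 3).
Proof. exact (CkOn3_jet2c U_open U0 (phi_C3 (inord k))). Qed.

Lemma jet_H : jet3 (H 0) (H 1) (H 2) (H 3 0).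
Proof. exact (CkOn3_jet3 U_open U0 h_C3). Qed.

Lemma near0_B_add_D : \forall u \near 0, 0 < x 4 0 u + D.
Proof.
have [x4_cont _] := jet2_cont (jet_x 4).1; have [_ _ _ _ x40] := x_at0.
have x40_gt : - D < x 4 0 0 by rewrite x40 oppr_lt0.
by apply: filterS (cvgr_gt _ x4_cont _ x40_gt) => u; rewrite -subr_gt0 opprK.
Qed.

Lemma uaxis_state u : [/\ sS (phi (u *: e0)) = x 0 0 u,
  sV (phi (u *: e0)) = x 1 0 u, sI (phi (u *: e0)) = x 2 0 u,
  sR (phi (u *: e0)) = x 3 0 u & sB (phi (u *: e0)) = x 4 0 u].
Proof. by rewrite /x !DuE. Qed.

Lemma invariance_uaxis k : \forall u \near 0,
  H 0 u * x k 1 u = field p0 (phi (u *: e0)) 0 (inord k).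
Proof.
near=> u; have Uu : U (u *: e0) by near: u; exact: near0_U U_open U0.
have := congr1 (fun M : 'rV[R]_5 => M 0 (inord k)) (phi_invariant Uu).
by rewrite /= parof_uaxis => <-; rewrite mxE Dphi_entry // /H /x !DuE.
Unshelve. all: by end_near. Qed.

Lemma eq_R : \forall u \near 0,
  H 0 u * x 3 1 u = γ * x 2 0 u - (μ + ω) * x 3 0 u.
Proof.
apply: filterS (invariance_uaxis 3) => u ->.
by have [_ _ xI xR _] := uaxis_state u; rewrite field_R xI xR.
Qed.

Lemma eq_B : \forall u \near 0, H 0 u * x 4 1 u = η * x 2 0 u - δ * x 4 0 u.
Proof.
apply: filterS (invariance_uaxis 4) => u ->.
by have [_ _ xI _ xB'] := uaxis_state u; rewrite field_B xI xB'.
Qed.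

Lemma eq_S : \forall u \near 0, (x 4 0 u + D) * (H 0 u * x 0 1 u) =
  (x 4 0 u + D) * (Λ - (μ + ψ) * x 0 0 u + ω * x 3 0 u)
  - β * (x 0 0 u * x 4 0 u).
Proof.
apply: filterS2 near0_B_add_D (invariance_uaxis 0) => u xB ->.
have [xS _ _ xR xB'] := uaxis_state u; rewrite field_S xS xR xB'.
by field; rewrite lt0r_neq0.
Qed.

Lemma eq_V : \forall u \near 0, (x 4 0 u + D) * (H 0 u * x 1 1 u) =
  (x 4 0 u + D) * (ψ * x 0 0 u - μ * x 1 0 u) - σ * β * (x 1 0 u * x 4 0 u).
Proof.
apply: filterS2 near0_B_add_D (invariance_uaxis 1) => u xB ->.
have [xS xV _ _ xB'] := uaxis_state u; rewrite field_V xS xV xB'.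
by field; rewrite lt0r_neq0.
Qed.

Lemma eq_IB : \forall u \near 0,
  H 0 u * ((x 4 0 u + D) * (x 2 1 u + κ * x 4 1 u)) =
  β * ((x 0 0 u + σ * x 1 0 u) * x 4 0 u) - κ * δ * ((x 4 0 u + D) * x 4 0 u).
Proof.
apply: filterS3 near0_B_add_D (invariance_uaxis 2) eq_B => u xB eI eB.
have η_gt0 : 0 < η := p0_gt0 _.
rewrite mulrCA mulrDr mulrCA eB eI field_I.
have [xS xV xI _ xB'] := uaxis_state u; rewrite xS xV xI xB'.
by rewrite /κ; field; rewrite !lt0r_neq0.
Qed.

Lemma IB_factor_gt0 : 0 < D * (w 2 + κ * w 4).
Proof.
have [w2_gt0 _ w4_gt0] := w_gt0.
by rewrite mulr_gt0 // addr_gt0 // mulr_gt0 // divr_gt0 ?addr_gt0 ?p0_gt0.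
Qed.

Lemma H0_at0 : H 0 0 = 0.
Proof.
have := nbhs_singleton eq_IB; have [_ _ _ _ ->] := x_at0.
rewrite !(mulr0, add0r, subr0, oppr0) => /eqP.
rewrite mulf_eq0 => /orP[/eqP // |].
by rewrite (gt_eqF IB_factor_gt0).
Qed.

Lemma H2_at0 : H 2 0 = 0.
Proof. by move: a_eq0; rewrite /coef_a /H Du0 /=; lra. Qed.

Lemma B_orders : H 1 0 = 0 /\ η * z 2 - δ * z 4 = 0.
Proof.
have jL := jet2M jet_H.1 (jet2c_x 4).1.
have jR := jet2D (jet2Z η (jet_x 2).1) (jet2N (jet2Z δ (jet_x 4).1)).
have [_ e1 e2] := near_eq_jet2 jL jR eq_B.
have [_ _ _ _ nB] := null_rows; have [_ _ w4_gt0] := w_gt0.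
move: e1 e2 => /=; rewrite H0_at0 H2_at0 !(mul0r, addr0) => e1 e2.
have H1w4 : H 1 0 * w 4 = 0 by rewrite [LHS]e1.
have H1_0 : H 1 0 = 0.
  by move/eqP: H1w4; rewrite mulf_eq0 (gt_eqF w4_gt0) orbF => /eqP.
by split=> //; rewrite /z -e2 H1_0; ring.
Qed.

Lemma R_second_order : γ * z 2 - (μ + ω) * z 3 = 0.
Proof.
have jL := jet2M jet_H.1 (jet2c_x 3).1.
have jR := jet2D (jet2Z γ (jet_x 2).1) (jet2N (jet2Z (μ + ω) (jet_x 3).1)).
have [_ _ e2] := near_eq_jet2 jL jR eq_R.
move: e2 => /=; rewrite H0_at0 B_orders.1 H2_at0 /z => e2; lra.
Qed.

Lemma Lam_dfeS : Λ = (μ + ψ) * S0.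
Proof. by rewrite /dfeS; field; rewrite lt0r_neq0 // addr_gt0 ?p0_gt0. Qed.

Lemma psi_dfeS : ψ * S0 = μ * V0.
Proof.
have [μ_gt0 μψ_gt0] : 0 < μ /\ 0 < μ + ψ.
  by split; rewrite ?addr_gt0 ?p0_gt0.
by rewrite /dfeS /dfeV; field; rewrite !lt0r_neq0.
Qed.

Lemma S_second_order : 2 * w 4 * (ω * w 3 - (μ + ψ) * w 0)
  + D * (ω * z 3 - (μ + ψ) * z 0) - β * (2 * (w 0 * w 4) + S0 * z 4) = 0.
Proof.
have jB := jet2D (jet_x 4).1 (jet2_cst D).
have jL := jet2M jB (jet2M jet_H.1 (jet2c_x 0).1).
have jR := jet2D (jet2M jB (jet2D (jet2D (jet2_cst Λ)
    (jet2N (jet2Z (μ + ψ) (jet_x 0).1))) (jet2Z ω (jet_x 3).1)))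
  (jet2N (jet2Z β (jet2M (jet_x 0).1 (jet_x 4).1))).
have [_ _ e2] := near_eq_jet2 jL jR eq_S.
have [x0 _ _ x3 x4] := x_at0.
move: e2 => /=; rewrite H0_at0 B_orders.1 H2_at0 x0 x3 x4 Lam_dfeS /w /z => e2.
lra.
Qed.

Lemma V_second_order : 2 * w 4 * (ψ * w 0 - μ * w 1)
  + D * (ψ * z 0 - μ * z 1) - σ * β * (2 * (w 1 * w 4) + V0 * z 4) = 0.
Proof.
have jB := jet2D (jet_x 4).1 (jet2_cst D).
have jL := jet2M jB (jet2M jet_H.1 (jet2c_x 1).1).
have jR := jet2D (jet2M jB (jet2D (jet2Z ψ (jet_x 0).1)
    (jet2N (jet2Z μ (jet_x 1).1))))
  (jet2N (jet2Z (σ * β) (jet2M (jet_x 1).1 (jet_x 4).1))).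
have [_ _ e2] := near_eq_jet2 jL jR eq_V.
have [x0 x1 _ _ x4] := x_at0.
have SV := congr1 (fun t => t * x 4 2 0) psi_dfeS.
move: e2 => /=; rewrite H0_at0 B_orders.1 H2_at0 x0 x1 x4 /w /z => e2.
lra.
Qed.

Lemma IB_orders : β * (w 0 + σ * w 1) = κ * δ * w 4 /\
  H 3 0 * (D * (w 2 + κ * w 4)) = β * (3 * (z 0 + σ * z 1) * w 4
    + 3 * (w 0 + σ * w 1) * z 4) - κ * δ * (6 * (w 4 * z 4)).
Proof.
have jB : jet2c (x 4 0) (x 4 1) (x 4 2).
  by split; [exact: (jet_x 4).1 | exact: (jet2_cont (jet2c_x 4).1).2].
have jZ := jet2cM (jet2cD jB (jet2c_cst D))
  (jet2cD (jet2c_x 2) (jet2cZ κ (jet2c_x 4))).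
have jL := jet3M0 jet_H H0_at0 jZ.
have jR :=
  jet3D (jet3Z β (jet3M (jet3D (jet_x 0) (jet3Z σ (jet_x 1))) (jet_x 4)))
  (jet3N (jet3Z (κ * δ) (jet3M (jet3D (jet_x 4) (jet3_cst D)) (jet_x 4)))).
have [_ _ e2 e3] := near_eq_jet3 jL jR eq_IB.
have [x0 x1 _ _ x4] := x_at0; have [_ _ w4_gt0] := w_gt0.
have k2 := congr1 (fun t => t * x 4 2 0) kappa_R0.
have k3 := congr1 (fun t => t * x 4 3 0) kappa_R0.
move: e2 e3 => /=; rewrite H0_at0 B_orders.1 H2_at0 x0 x1 x4 /w /z => e2 e3.
split; last by lra.
have : 2 * x 4 1 0 * (β * (x 0 1 0 + σ * x 1 1 0) - κ * δ * x 4 1 0) = 0.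
  by lra.
move/eqP; rewrite mulf_eq0 mulf_eq0 (gt_eqF w4_gt0) pnatr_eq0 /= subr_eq0.
by move/eqP.
Qed.

Lemma zR_zB : z 3 = z 2 / w 2 * w 3 /\ z 4 = z 2 / w 2 * w 4.
Proof.
have [_ _ _ nR nB] := null_rows; have zB := B_orders.2.
have zR := R_second_order; have [w2_gt0 _ _] := w_gt0.
have [μω_gt0 δ_gt0] : 0 < μ + ω /\ 0 < δ.
  by split; rewrite ?addr_gt0 ?p0_gt0.
have -> : w 3 = γ * w 2 / (μ + ω).
  by apply: (mulIf (lt0r_neq0 μω_gt0)); rewrite divfK ?lt0r_neq0 //; lra.
have -> : w 4 = η * w 2 / δ.
  by apply: (mulIf (lt0r_neq0 δ_gt0)); rewrite divfK ?lt0r_neq0 //; lra.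
have -> : z 3 = γ * z 2 / (μ + ω).
  by apply: (mulIf (lt0r_neq0 μω_gt0)); rewrite divfK ?lt0r_neq0 //; lra.
have -> : z 4 = η * z 2 / δ.
  by apply: (mulIf (lt0r_neq0 δ_gt0)); rewrite divfK ?lt0r_neq0 //; lra.
by split; field; rewrite !lt0r_neq0.
Qed.

Lemma dfe_gt0 : 0 < S0 /\ 0 < V0.
Proof.
have [Λ_gt0 μ_gt0 ψ_gt0] : [/\ 0 < Λ, 0 < μ & 0 < ψ].
  by split; exact: p0_gt0.
by split; rewrite /dfeS /dfeV divr_gt0 ?mulr_gt0 ?addr_gt0.
Qed.

Let T : R := z 0 + σ * z 1 - (S0 + σ * V0) * z 4 / D.

Lemma T_eq :
  T = 2 * β * σ * w 4 * (w 0 + w 1 - (S0 + V0) * w 4 / D) / (D * (μ + ψ)).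
Proof.
have [nS nV _ _ _] := null_rows; have [a_rel _] := IB_orders.
have zS := S_second_order; have zV := V_second_order; have [z3E z4E] := zR_zB.
have [μ_gt0 ψ_gt0 ω_gt0] : [/\ 0 < μ, 0 < ψ & 0 < ω].
  by split; exact: p0_gt0.
have [w2_gt0 _ _] := w_gt0.
have [D0 μ0 μψ0 ω0 w20] :
    [/\ D != 0, μ != 0, μ + ψ != 0, ω != 0 & w 2 != 0].
  by split; rewrite lt0r_neq0 ?addr_gt0.
have z0E : z 0 = (2 * w 4 * (ω * w 3 - (μ + ψ) * w 0) + D * ω * z 3
    - β * (2 * (w 0 * w 4) + S0 * z 4)) / (D * (μ + ψ)).
  by apply: (mulIf (mulf_neq0 D0 μψ0)); rewrite divfK ?mulf_neq0 //; lra.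
have z1E : z 1 = (2 * w 4 * (ψ * w 0 - μ * w 1) + D * ψ * z 0
    - σ * β * (2 * (w 1 * w 4) + V0 * z 4)) / (D * μ).
  by apply: (mulIf (mulf_neq0 D0 μ0)); rewrite divfK ?mulf_neq0 //; lra.
have w3E : w 3 = ((μ + ψ) * w 0 + β * S0 * w 4 / D) / ω.
  by apply: (mulIf ω0); rewrite divfK //; lra.
have w1E : w 1 = (ψ * w 0 - σ * β * V0 * w 4 / D) / μ.
  by apply: (mulIf μ0); rewrite divfK //; lra.
have A0 : w 0 + σ * w 1 - (S0 + σ * V0) * w 4 / D = 0.
  have β0 : β != 0 by exact: lt0r_neq0 (p0_gt0 _).
  have E : β * (w 0 + σ * w 1) * D = β * (S0 + σ * V0) * w 4.
    by rewrite a_rel -kappa_R0; ring.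
  apply: (mulfI (mulf_neq0 β0 D0)); rewrite mulr0.
  have -> : β * D * (w 0 + σ * w 1 - (S0 + σ * V0) * w 4 / D) =
      β * (w 0 + σ * w 1) * D - β * (S0 + σ * V0) * w 4 by field.
  by rewrite E subrr.
(* The two sides differ by [c] times the left-hand side of [A0]. *)
pose c := z 2 / w 2 - 2 * β * w 4 * (μ + σ * ψ + σ * μ) / (D * μ * (μ + ψ)).
rewrite -[RHS]addr0 -(mulr0 c) -A0 /T z1E z0E z3E z4E w3E w1E /c.
by field; rewrite ?D0 ?μ0 ?μψ0 ?ω0 ?w20.
Qed.

Lemma T_lt0 : T < 0.
Proof.
have [w2_gt0 w3_gt0 w4_gt0] := w_gt0; have [S0_gt0 V0_gt0] := dfe_gt0.
have [β_gt0 σ_gt0 μ_gt0 ψ_gt0] : [/\ 0 < β, 0 < σ, 0 < μ & 0 < ψ].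
  by split; exact: p0_gt0.
rewrite T_eq wS_add_wV pmulr_llt0 ?invr_gt0 ?mulr_gt0 ?addr_gt0 //.
rewrite pmulr_rlt0 ?mulr_gt0 //.
have : 0 < (S0 + V0) * w 4 / D by rewrite divr_gt0 ?mulr_gt0 ?addr_gt0.
lra.
Qed.

Lemma H3_lt0 : H 3 0 < 0.
Proof.
have [a_rel H3E] := IB_orders; have [_ _ w4_gt0] := w_gt0.
have κδE : κ * δ = β * (S0 + σ * V0) / D.
  by rewrite -kappa_R0; field; rewrite lt0r_neq0.
have a_z : β * (w 0 + σ * w 1) * z 4 = κ * δ * w 4 * z 4 by rewrite a_rel.
have κδ_z := congr1 (fun t => t * (w 4 * z 4)) κδE.
have E : H 3 0 * (D * (w 2 + κ * w 4)) = 3 * β * w 4 * T.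
  by rewrite H3E /T /=; lra.
rewrite -(pmulr_llt0 _ IB_factor_gt0) E pmulr_rlt0 ?mulr_gt0 ?p0_gt0 //.
exact: T_lt0.
Qed.

Lemma coef_c_lt0 : coef_c h < 0.
Proof. by have := H3_lt0; rewrite /H Du0 /coef_c /=; lra. Qed.

End CentreManifold.

Theorem lemma1 (R : realType) (p0 : 'I_10 -> R) (i1 i2 : 'I_10)
    (U : set 'rV[R]_3) (phi : 'rV[R]_3 -> 'rV[R]_5) (h : 'rV[R]_3 -> R) :
  (* bifurcation point *)
  (forall k, 0 < p0 k) ->
  R0 p0 = 1 ->
  bif_spectrum (jac p0) ->
  (* choice of the two bifurcation parameters; DFE independent of alpha1 *)
  i1 != i2 ->
  (forall t s : R, dfe (shiftp p0 i1 i2 t s) = dfe (shiftp p0 i1 i2 0 s)) ->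
  (* centre manifold of the extended system, parametrised by (u, alpha1, alpha2) *)
  open U -> U 0 ->
  (forall j : 'I_5, CkOn 3 U (fun y => phi y 0 j)) ->
  CkOn 3 U h ->
  (forall y, U y -> y 0 (inord 0) = 0 -> phi y = dfe (parof p0 i1 i2 y)) ->
  (forall y, U y -> h y *: 'D_(e3 R 0) phi y = field (parof p0 i1 i2 y) (phi y)) ->
  (* u increases along the null eigenvector with non-negative infected components *)
  'D_(e3 R 0) phi 0 != 0 ->
  jac p0 *m ('D_(e3 R 0) phi 0)^T = 0 ->
  0 <= sI ('D_(e3 R 0) phi 0) -> 0 <= sB ('D_(e3 R 0) phi 0) ->
  (* hypotheses on the normal-form coefficients *)
  coef_a h = 0 -> 0 < coef_b h -> coef_e h != 0 ->
  coef_c h <= 0.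
Proof.
move=> p0_gt0 R0_eq1 _ _ _ U_open U0 phi_C3 h_C3 phi_dfe phi_inv phi'_neq0
  phi'_null phi'_I_ge0 _ a_eq0 _ _.
exact/ltW/(coef_c_lt0 p0_gt0 R0_eq1 U_open U0 phi_C3 h_C3 phi_dfe phi_inv
  phi'_null phi'_neq0 phi'_I_ge0 a_eq0).
Qed.
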